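(* Let $n,m\ge 1$ be integers. If there exist Knowlton-Graham partitions of $\{1,\ldots,n\}$ of order $m$, then $\binom{m+1}{2}\le n\le J(m)$, where $J(m)=\sum_{j=1}^m j\lfloor m/j\rfloor$.
   Context: A pair of Knowlton-Graham partitions of $\{1,\ldots,n\}$ consists of two partitions $A_1,\ldots,A_p$ and $B_1,\ldots,B_q$ of $\{1,\ldots,n\}$ into nonempty pairwise disjoint sets such that, for every pair of positive integers $(j,k)$, at most one element of $\{1,\ldots,n\}$ lies both in some $A_i$ with $|A_i|=j$ and in some $B_l$ with $|B_l|=k$. The order of such a pair is the largest of the cardinalities $|A_1|,\ldots,|A_p|,|B_1|,\ldots,|B_q|$. *)

From mathcomp Require Import all_boot.
Set Implicit Arguments. Unset Strict Implicit. Unset Printing Implicit Defensive.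

(* The ground set {1,...,n} is modelled by 'I_n = {0,...,n-1}. *)

Definition KG_pair (n : nat) (P Q : {set {set 'I_n}}) : Prop :=
  [/\ partition P [set: 'I_n], partition Q [set: 'I_n] &
      forall j k : nat, forall x y : 'I_n,
        #|pblock P x| = j -> #|pblock Q x| = k ->
        #|pblock P y| = j -> #|pblock Q y| = k -> x = y].

Definition KG_order (n : nat) (P Q : {set {set 'I_n}}) : nat :=
  maxn (\max_(A in P) #|A|) (\max_(B in Q) #|B|).

Definition J (m : nat) : nat := \sum_(1 <= j < m.+1) j * (m %/ j).

From mathcomp Require Import all_boot.
Set Implicit Arguments. Unset Strict Implicit.

(* Write a x and b x for the sizes of the P-block and the Q-block of x; the
   Knowlton-Graham condition says that x |-> (a x, b x) is injective, and all
   values lie in [1, m].  On the level set {a = j} the map b is injective, so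
   the level set has at most m elements; being a union of P-blocks of size j
   its size is a multiple of j, hence at most j * (m / j), and summing over j
   gives n <= J(m).  Conversely, if A is a block of size m, say of P, then b is
   injective on A with m possible values, so every k in [1, m] is b x for some
   x in A; the whole Q-block of x lies in {b = k}, so {b = k} has at least k
   elements, and summing over k gives n >= 1 + ... + m. *)

Lemma sum_card_fibers (T : finType) (f : T -> nat) N :
  (forall x, f x < N) -> \sum_(0 <= k < N) #|[set x | f x == k]| = #|T|.
Proof.
move=> ltfN; rewrite -sum1_card big_mkord.
rewrite (partition_big (fun x => Ordinal (ltfN x)) xpredT) //=.
apply: eq_bigr => k _; rewrite -sum1_card; apply: eq_bigl => x.
by rewrite inE -(inj_eq val_inj).
Qed.

Section InjectiveInto.
Variables (T : finType) (U : eqType) (D : {pred T}) (f : T -> U) (r : seq U).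
Hypotheses (injf : {in D &, injective f}) (frange : {in D, forall x, f x \in r}).

Let uniq_image : uniq (map f (enum D)).
Proof.
rewrite map_inj_in_uniq ?enum_uniq // => x y.
by rewrite !mem_enum; apply: injf.
Qed.

Let sub_image : {subset map f (enum D) <= r}.
Proof. by move=> _ /mapP [x xD ->]; rewrite frange // -mem_enum. Qed.

Lemma card_le_size_of_inj_in : #|D| <= size r.
Proof. by rewrite cardE -(size_map f) uniq_leq_size. Qed.

Lemma inj_in_onto_of_card : size r <= #|D| ->
  forall y, y \in r -> exists2 x, x \in D & f x = y.
Proof.
rewrite cardE -(size_map f) => le_r_D y yr.
have [_ /(_ y)] := uniq_min_size uniq_image sub_image le_r_D.
by rewrite yr => /mapP [x xD ->]; exists x; rewrite // -mem_enum.
Qed.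

End InjectiveInto.

Section PartitionBlocks.
Variables (T : finType) (P : {set {set T}}).
Hypothesis partP : partition P [set: T].

Let mem_cover_full x : x \in cover P.
Proof. by case/and3P: partP => /eqP -> _ _; rewrite inE. Qed.

Lemma pblock_full_mem x : pblock P x \in P.
Proof. exact: pblock_mem. Qed.

Lemma mem_pblock_full x : x \in pblock P x.
Proof. by rewrite mem_pblock. Qed.

Lemma card_pblock_gt0 x : 0 < #|pblock P x|.
Proof. by apply/card_gt0P; exists x; apply: mem_pblock_full. Qed.

Definition block_level k := [set x | #|pblock P x| == k].

Lemma card_pblock_le_level x : #|pblock P x| <= #|block_level #|pblock P x| |.
Proof.
apply/subset_leq_card/subsetP => y xy; rewrite inE.
by case/and3P: partP => _ tP _; rewrite (same_pblock tP xy).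
Qed.

Lemma dvdn_card_level k : k %| #|block_level k|.
Proof.
set Pk := [set A in P | #|A| == k].
have partPk : partition Pk (block_level k).
  case/and3P: partP => _ tP notP0; apply/and3P; split.
  - apply/eqP/setP => y; rewrite inE; apply/bigcupP/idP.
      by case=> A; rewrite inE => /andP [AP /eqP <-] yA; rewrite (def_pblock tP AP yA).
    by move=> yk; exists (pblock P y); rewrite ?mem_pblock_full // inE pblock_full_mem.
  - by apply: trivIsetS tP; apply/subsetP => A; rewrite inE => /andP [].
  - by apply: contra notP0; rewrite inE => /andP [].
rewrite (@card_uniform_partition _ k _ _ _ partPk) ?dvdn_mull // => A.
by rewrite inE => /andP [_ /eqP].
Qed.

End PartitionBlocks.

Lemma bigmax_card_attained (T : finType) (S : {set {set T}}) :
  0 < \max_(A in S) #|A| -> exists2 A, A \in S & #|A| = \max_(A in S) #|A|.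
Proof.
have [S0 | S_gt0] := posnP #|S|; first by rewrite big_pred0 // => A; rewrite (card0_eq S0).
by have [A AS ->] := eq_bigmax_cond (fun A : {set T} => #|A|) S_gt0; exists A.
Qed.

Section KnowltonGraham.
Variables (T : finType) (P Q : {set {set T}}) (m : nat).
Hypotheses (partP : partition P [set: T]) (partQ : partition Q [set: T]).
Hypothesis injPQ : forall x y,
  #|pblock P x| = #|pblock P y| -> #|pblock Q x| = #|pblock Q y| -> x = y.
Hypotheses (boundP : forall x, #|pblock P x| <= m)
           (boundQ : forall x, #|pblock Q x| <= m).

Let card_pblockQ_in x : #|pblock Q x| \in iota 1 m.
Proof. by rewrite mem_iota card_pblock_gt0 // add1n ltnS boundQ. Qed.

Let injQ_level (j : nat) : {in block_level P j &, injective (fun x => #|pblock Q x|)}.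
Proof. by move=> x y; rewrite !inE => /eqP Px /eqP Py; apply: injPQ; rewrite Px Py. Qed.

Lemma card_level_le j : #|block_level P j| <= j * (m %/ j).
Proof.
have le_m : #|block_level P j| <= m.
  rewrite -(size_iota 1 m).
  exact: card_le_size_of_inj_in (@injQ_level j) (fun x _ => card_pblockQ_in x).
have [c card_c] := dvdnP (dvdn_card_level partP j).
case: (posnP j) => [j0 | j_gt0]; first by rewrite card_c j0 !muln0.
by rewrite card_c mulnC leq_mul2l leq_divRL // -card_c le_m orbT.
Qed.

Lemma card_le_J : #|T| <= J m.
Proof.
have ltPm x : #|pblock P x| < m.+1 by rewrite ltnS.
have -> : J m = \sum_(0 <= j < m.+1) j * (m %/ j) by rewrite [RHS]big_ltn.
rewrite -(sum_card_fibers ltPm); apply: leq_sum => j _; exact: card_level_le.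
Qed.

Lemma bin2_le_card A : A \in P -> #|A| = m -> 'C(m.+1, 2) <= #|T|.
Proof.
move=> AP cardA.
have injQ_A : {in A &, injective (fun x => #|pblock Q x|)}.
  move=> x y xA yA; apply: injPQ.
  by case/and3P: partP => _ tP _; rewrite (def_pblock tP AP xA) (def_pblock tP AP yA).
have onto k : 0 < k <= m -> exists2 x, x \in A & #|pblock Q x| = k.
  move=> k_in; apply: (inj_in_onto_of_card injQ_A (fun x _ => card_pblockQ_in x)).
    by rewrite size_iota cardA.
  by rewrite mem_iota add1n ltnS.
have le_level k : k <= m -> k <= #|block_level Q k|.
  case: k => [|k] // le_km; have [|x _ <-] := onto k.+1; first exact/andP.
  exact: card_pblock_le_level.
have ltQm x : #|pblock Q x| < m.+1 by rewrite ltnS.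
rewrite -bin2_sum -(sum_card_fibers ltQm) !big_nat.
by apply: leq_sum => k /andP [_ /le_level].
Qed.

End KnowltonGraham.

Theorem theorem1 (n m : nat) :
  1 <= n -> 1 <= m ->
  (exists P Q : {set {set 'I_n}}, KG_pair P Q /\ KG_order P Q = m) ->
  'C(m.+1, 2) <= n <= J m.
Proof.
move=> _ m_gt0 [P [Q [[partP partQ KG] order_m]]].
have injPQ x y : #|pblock P x| = #|pblock P y| -> #|pblock Q x| = #|pblock Q y| -> x = y.
  by move=> eP eQ; apply: (KG _ _ x y erefl erefl).
have injQP x y : #|pblock Q x| = #|pblock Q y| -> #|pblock P x| = #|pblock P y| -> x = y.
  by move=> eQ eP; apply: injPQ.
have boundP x : #|pblock P x| <= m.
  by rewrite -order_m (leq_trans _ (leq_maxl _ _)) // leq_bigmax_cond ?pblock_full_mem.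
have boundQ x : #|pblock Q x| <= m.
  by rewrite -order_m (leq_trans _ (leq_maxr _ _)) // leq_bigmax_cond ?pblock_full_mem.
apply/andP; split; last first.
  by rewrite -[X in X <= _](card_ord n) (card_le_J partP partQ injPQ boundP boundQ).
move: order_m m_gt0; rewrite /KG_order.
have [_ | _] := leqP (\max_(B in Q) #|B|) (\max_(A in P) #|A|).
- move=> max_m; rewrite -[in 0 < _]max_m => /bigmax_card_attained [A AP].
  by rewrite max_m => /(bin2_le_card partP partQ injPQ boundQ AP); rewrite card_ord.
- move=> max_m; rewrite -[in 0 < _]max_m => /bigmax_card_attained [B BQ].
  by rewrite max_m => /(bin2_le_card partQ partP injQP boundP BQ); rewrite card_ord.
Qed.
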